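(* Under the standing setting and assumptions (A1)–(A3) described in the context, the optimal payoff map $\mathcal R$ is outer semicontinuous at every $X\in\mathcal X$.
   Context: Let $\mathcal X$ be a Hausdorff, first countable, locally convex topological vector space over $\mathbb R$, partially ordered by a partial order $\geq$ with positive cone $\mathcal X_+=\{X\in\mathcal X: X\geq 0\}$. Let $\mathcal M\subset\mathcal X$ be a vector subspace with $1<\dim\mathcal M<\infty$, carrying the relative topology, and let $\pi:\mathcal M\to\mathbb R$ be linear. Standing assumptions: (A1) there is $U\in\mathcal M\cap\mathcal X_+$ with $\pi(U)=1$; (A2) $\mathcal A\subsetneq\mathcal X$ is closed, contains $0$, and satisfies $\mathcal A+\mathcal X_+\subset\mathcal A$; (A3) the map $\rho:\mathcal X\to[-\infty,\infty]$, $\rho(X)=\inf\{\pi(Z): Z\in\mathcal M,\ X+Z\in\mathcal A\}$, is finitely valued and continuous. The optimal payoff map is $\mathcal R(X)=\{Z\in\mathcal M: X+Z\in\mathcal A,\ \pi(Z)=\rho(X)\}$. $\mathcal R$ is outer semicontinuous at $X$ if for every $Z\notin\mathcal R(X)$ there are open neighborhoods $\mathcal U_X\subset\mathcal X$ of $X$ and $\mathcal U_Z\subset\mathcal M$ of $Z$ such that $\mathcal R(Y)\cap\mathcal U_Z=\emptyset$ for all $Y\in\mathcal U_X$. *)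

From HB Require Import structures.
From mathcomp Require Import all_boot all_order all_algebra.
From mathcomp Require Import all_classical all_reals all_analysis.
Set Implicit Arguments. Unset Strict Implicit. Unset Printing Implicit Defensive.
Import Order.TTheory GRing.Theory Num.Theory.
Import numFieldTopology.Exports.
Local Open Scope classical_set_scope.
Local Open Scope ring_scope.

Definition first_countable (T : topologicalType) : Prop :=
  forall x : T, exists B : nat -> set T,
    (forall n, nbhs x (B n)) /\ (forall U, nbhs x U -> exists n, B n `<=` U).

Definition vector_order (R : realType) (E : lmodType R) (le : E -> E -> Prop) : Prop :=
  [/\ (forall x, le x x),
      (forall x y, le x y -> le y x -> x = y),
      (forall x y z, le x y -> le y z -> le x z),
      (forall x y z, le x y -> le (x + z) (y + z)) &
      (forall (a : R) x y, 0 <= a -> le x y -> le (a *: x) (a *: y))].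

Definition pos_cone (R : realType) (E : lmodType R) (le : E -> E -> Prop) : set E :=
  [set x | le 0 x].

Definition lin_subspace (R : realType) (E : lmodType R) (M : set E) : Prop :=
  [/\ M 0, (forall x y, M x -> M y -> M (x + y)) & (forall (a : R) x, M x -> M (a *: x))].

Definition has_dim (R : realType) (E : lmodType R) (M : set E) (n : nat) : Prop :=
  exists b : 'I_n -> E,
    [/\ (forall i, M (b i)),
        (forall c : 'I_n -> R, \sum_(i < n) c i *: b i = 0 -> forall i, c i = 0) &
        (forall z, M z -> exists c : 'I_n -> R, z = \sum_(i < n) c i *: b i)].

(* pi : M -> R linear (given as a function on E; only its values on M matter) *)
Definition linear_on (R : realType) (E : lmodType R) (M : set E) (pi : E -> R) : Prop :=
  forall (a : R) x y, M x -> M y -> pi (a *: x + y) = a * pi x + pi y.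

Definition rho (R : realType) (E : lmodType R) (M A : set E) (pi : E -> R) (X : E)
  : \bar R :=
  ereal_inf [set (pi Z)%:E | Z in [set Z | M Z /\ A (X + Z)]].

Definition optpay (R : realType) (E : lmodType R) (M A : set E) (pi : E -> R) (X : E)
  : set E :=
  [set Z | [/\ M Z, A (X + Z) & (pi Z)%:E = rho M A pi X]].

(* outer semicontinuity of the optimal payoff map at X; the neighbourhood
   U_Z of Z is open in M for the relative topology, i.e. U_Z = V `&` M with
   V open in E *)
Definition outer_semicontinuous_at (R : realType) (E : tvsType R)
  (M A : set E) (pi : E -> R) (X : E) : Prop :=
  forall Z, M Z -> ~ optpay M A pi X Z ->
    exists UX : set E, exists V : set E,
      [/\ open UX, UX X, open V, V Z &
          forall Y, UX Y -> optpay M A pi Y `&` (V `&` M) = set0].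

(* Cash additivity rho(X + Z) = rho(X) - pi(Z) for Z in M shows that Z in M is
   an optimal payoff for X exactly when X + Z lies in A `&` [set Y | rho Y = 0],
   which is closed because A is closed and rho is continuous.  Outer
   semicontinuity then follows from the continuity of (Y, Z) |-> Y + Z. *)

From HB Require Import structures.
From mathcomp Require Import all_boot all_order all_algebra.
From mathcomp Require Import all_classical all_reals all_analysis.
Set Implicit Arguments. Unset Strict Implicit. Unset Printing Implicit Defensive.
Import Order.TTheory GRing.Theory Num.Theory.
Import numFieldTopology.Exports.
Local Open Scope classical_set_scope.
Local Open Scope ring_scope.

Section CashAdditivity.
Variables (R : realType) (E : lmodType R) (M A : set E) (pi : E -> R).
Hypotheses (linM : lin_subspace M) (linpi : linear_on M pi).

Lemma lin_subspaceB x y : M x -> M y -> M (y - x).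
Proof. by case: linM => _ Madd Mscale Mx My; rewrite -scaleN1r; exact/Madd/Mscale. Qed.

Lemma lin_subspaceN x : M x -> M (- x).
Proof. by case: linM => M0 _ _ Mx; rewrite -sub0r; exact: lin_subspaceB. Qed.

Lemma linear_on0 : pi 0 = 0.
Proof.
case: linM => M0 _ _.
have := linpi 1 M0 M0; rewrite scale1r addr0 mul1r -{1}[pi 0]addr0.
by move=> /addrI.
Qed.

Lemma linear_onN x : M x -> pi (- x) = - pi x.
Proof.
case: linM => M0 _ _ Mx.
by have := linpi (-1) Mx M0; rewrite addr0 scaleN1r mulN1r linear_on0 addr0.
Qed.

Lemma linear_onB x y : M x -> M y -> pi (y - x) = pi y - pi x.
Proof. by move=> Mx My; rewrite addrC -scaleN1r linpi // mulN1r addrC. Qed.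

Lemma rho_shift_le X Z : M Z -> (rho M A pi (X + Z) + (pi Z)%:E <= rho M A pi X)%E.
Proof.
move=> MZ; apply: le_ereal_inf_tmp => _ [V [MV AXV] <-].
have feasible : M (V - Z) /\ A (X + Z + (V - Z)).
  by split; [exact: lin_subspaceB | rewrite addrACA subrr addr0].
rewrite -lee_suber_addr // -EFinB -linear_onB //.
by apply: ereal_inf_lbound; exists (V - Z).
Qed.

Lemma rho_shift X Z : M Z -> rho M A pi (X + Z) = (rho M A pi X - (pi Z)%:E)%E.
Proof.
move=> MZ; apply/le_anti/andP; split.
  by have := leeD2r (- (pi Z)%:E) (rho_shift_le X MZ); rewrite addeK.
have := rho_shift_le (X + Z) (lin_subspaceN MZ).
by rewrite addrK linear_onN // EFinN.
Qed.

Lemma optpayE X Z : M Z ->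
  optpay M A pi X Z <-> A (X + Z) /\ rho M A pi (X + Z) = 0%E.
Proof.
move=> MZ; rewrite rho_shift //; split.
  by case=> _ AXZ <-; rewrite subee.
case=> AXZ rho0; split => //; move: rho0.
by case: (rho M A pi X) => [r| |] //= /eqP; rewrite -EFinB eqe subr_eq0 => /eqP ->.
Qed.

End CashAdditivity.

Lemma nbhs_add_split (R : realType) (E : tvsType R) (O : set E) (X Z : E) :
  nbhs (X + Z) O -> exists UX V : set E,
  [/\ open UX, UX X, open V, V Z & forall Y Z', UX Y -> V Z' -> O (Y + Z')].
Proof.
move=> nO; have [[B1 B2] /= [nB1 nB2] B12] := add_continuous (X, Z) _ nO.
exists (interior B1), (interior B2); split => //; try exact: open_interior.
by move=> Y Z' /interior_subset B1Y /interior_subset B2Z'; exact: (B12 (Y, Z')).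
Qed.

Theorem mainTheorem3 (R : realType) (E : tvsType R)
  (le : E -> E -> Prop) (M A : set E) (pi : E -> R) (n : nat) :
  hausdorff_space E ->
  first_countable E ->
  vector_order le ->
  lin_subspace M ->
  (1 < n)%N -> has_dim M n ->
  linear_on M pi ->
  (* (A1) *)
  (exists U, [/\ M U, pos_cone le U & pi U = 1]) ->
  (* (A2) *)
  closed A -> A 0 -> A <> setT ->
  (forall X P, A X -> pos_cone le P -> A (X + P)) ->
  (* (A3) *)
  (forall X, rho M A pi X \is a fin_num) ->
  continuous (fun X => fine (rho M A pi X)) ->
  forall X, outer_semicontinuous_at M A pi X.
Proof.
move=> _ _ _ linM _ _ linpi _ closedA _ _ _ fin_rho cont_rho X Z MZ not_opt.
pose C := A `&` [set Y | fine (rho M A pi Y) = 0].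
have closedC : closed C.
  apply: closedI closedA _.
  exact: (@preimage_closed _ _ (fun Y => fine (rho M A pi Y)) _ (fun Y _ => cont_rho Y)
                           (@closed_eq _ 0)).
have optC Y Z' : optpay M A pi Y Z' -> C (Y + Z').
  move=> opt; have [MZ' _ _] := opt.
  by move: opt => /(optpayE A linM linpi Y MZ') [AYZ' rho0]; split => //=; rewrite rho0.
have notC : ~ C (X + Z).
  case=> AXZ rho0; apply/not_opt/(optpayE A linM linpi X MZ); split => //.
  by rewrite -(fineK (fin_rho _)) rho0.
have nC : nbhs (X + Z) (~` C) by apply: open_nbhs_nbhs; split => //; exact: closed_openC.
have [UX [V [oUX UXX oV VZ sepC]]] := nbhs_add_split nC.
exists UX, V; split => // Y UXY; apply/seteqP; split => // Z' [/optC CYZ' [VZ' _]].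
exact: sepC CYZ'.
Qed.
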